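(* Let $\hat V$ be an $\omega$-nonstandard model of $ZFC^-$ and suppose $\mathfrak{p}_{\hat V}<\mathfrak{t}_{\hat V}$. Writing $\kappa=\mathfrak{p}_{\hat V}$, we have $(\kappa,\kappa)\notin\mathcal{C}_{\hat V}$.
   Context: $ZFC^-$ denotes $ZFC$ without the powerset axiom, with replacement strengthened to collection and choice strengthened to the well-ordering principle. For a model $\hat V \models ZFC^-$, write $\hat\omega$ for $\omega^{\hat V}$ and $\hat<$ for its order. $\hat V$ is $\omega$-nonstandard if $\hat\omega \neq \omega$. For infinite regular cardinals $\kappa,\theta$, a $(\kappa,\theta)$-cut in a linear order $(L,<)$ is a pair of sequences $(a_\alpha:\alpha<\kappa)$ strictly increasing and $(b_\beta:\beta<\theta)$ strictly decreasing with $a_\alpha<b_\beta$ for all $\alpha,\beta$, such that no $c\in L$ satisfies $a_\alpha<c<b_\beta$ for all $\alpha,\beta$. $\mathcal{C}_{\hat V}$ is the set of pairs $(\kappa,\theta)$ of infinite regular cardinals such that $(\hat\omega,\hat<)$ admits a $(\kappa,\theta)$-cut, and $\mathfrak{p}_{\hat V}=\min\{\kappa+\theta:(\kappa,\theta)\in\mathcal{C}_{\hat V}\}$. A tree is a partial order with meets and a minimum element in which the predecessors of each element are linearly ordered; $\mathrm{tree\text{-}tops}(T)$ is the least cardinal $\kappa$ such that there is a strictly increasing sequence $(s_\alpha:\alpha<\kappa)$ in $T$ with no upper bound in $T$. $\mathfrak{t}_{\hat V}$ is the minimum over all $\hat n\in\hat\omega$ of $\mathrm{tree\text{-}tops}$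 of the (external) tree $(\hat n^{<\hat n},\subsetneq)$ of sequences (in $\hat V$) from $\hat n$ of $\hat V$-length less than $\hat n$, ordered by proper initial segment. *)

From Stdlib Require Import Arith.

(* de Bruijn variables, and satisfaction in a structure (M, E).       *)
Inductive form : Type :=
| fIn  : nat -> nat -> form
| fEq  : nat -> nat -> form
| fNeg : form -> form
| fAnd : form -> form -> form
| fOr  : form -> form -> form
| fImp : form -> form -> form
| fAll : form -> form
| fEx  : form -> form.

Definition scons {M : Type} (x : M) (e : nat -> M) : nat -> M :=
  fun n => match n with 0 => x | S k => e k end.

Fixpoint sat {M : Type} (E : M -> M -> Prop) (e : nat -> M) (p : form) : Prop :=
  match p with
  | fIn i j => E (e i) (e j)
  | fEq i j => e i = e j
  | fNeg q => ~ sat E e q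
  | fAnd q r => sat E e q /\ sat E e r
  | fOr q r => sat E e q \/ sat E e r
  | fImp q r => sat E e q -> sat E e r
  | fAll q => forall x, sat E (scons x e) q
  | fEx q => exists x, sat E (scons x e) q
  end.

Section ModelDefs.
Variables (M : Type) (E : M -> M -> Prop).

Definition is_empty (x : M) : Prop := forall z, ~ E z x.

(* p is the Kuratowski ordered pair {{a},{a,b}} *)
Definition is_opair (p a b : M) : Prop :=
  forall z, E z p <->
    ((forall u, E u z <-> u = a) \/ (forall u, E u z <-> (u = a \/ u = b))).

Definition rel_in (r a b : M) : Prop := exists p, E p r /\ is_opair p a b.

Definition is_succ (s y : M) : Prop := forall z, E z s <-> (E z y \/ z = y).

Definition inductive (I : M) : Prop :=
  (exists e, E e I /\ is_empty e) /\
  (forall y, E y I -> exists s, E s I /\ is_succ s y).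

Definition Ax_ext : Prop := forall x y, (forall z, E z x <-> E z y) -> x = y.
Definition Ax_found : Prop :=
  forall x, (exists y, E y x) -> exists y, E y x /\ ~ exists z, E z y /\ E z x.
Definition Ax_pair : Prop := forall a b, exists c, E a c /\ E b c.
Definition Ax_union : Prop :=
  forall a, exists u, forall y z, E y a -> E z y -> E z u.
Definition Ax_inf : Prop := exists I, inductive I.
(* Separation schema (with parameters e; variable 0 is x). *)
Definition Ax_sep : Prop :=
  forall (phi : form) (e : nat -> M) (a : M),
    exists b, forall x, E x b <-> (E x a /\ sat E (scons x e) phi).
(* Collection schema (variable 0 is y, variable 1 is x, parameters e). *)
Definition Ax_coll : Prop :=
  forall (phi : form) (e : nat -> M) (a : M),
    (forall x, E x a -> exists y, sat E (scons y (scons x e)) phi) ->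
    exists b, forall x, E x a -> exists y, E y b /\ sat E (scons y (scons x e)) phi.
Definition Ax_wo : Prop :=
  forall x, exists r,
    (forall a, E a x -> ~ rel_in r a a) /\
    (forall a b c, E a x -> E b x -> E c x -> rel_in r a b -> rel_in r b c -> rel_in r a c) /\
    (forall a b, E a x -> E b x -> rel_in r a b \/ a = b \/ rel_in r b a) /\
    (forall y, (forall z, E z y -> E z x) -> (exists z, E z y) ->
       exists m, E m y /\ forall z, E z y -> ~ rel_in r z m).

Definition ZFCminus : Prop :=
  Ax_ext /\ Ax_found /\ Ax_pair /\ Ax_union /\ Ax_inf /\ Ax_sep /\ Ax_coll /\ Ax_wo.

Definition is_omega (w : M) : Prop :=
  inductive w /\ forall I, inductive I -> forall x, E x w -> E x I.

Definition omega_nonstandard (w : M) : Prop :=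
  ~ exists f : nat -> M,
      (forall n, E (f n) w) /\ (forall x, E x w -> exists n, f n = x) /\
      (forall n m, n < m <-> E (f n) (f m)).

Definition is_seq (nh s : M) : Prop :=
  exists m, E m nh /\
    (forall p, E p s -> exists a b, is_opair p a b /\ E a m /\ E b nh) /\
    (forall a, E a m -> exists b, rel_in s a b /\ forall b', rel_in s a b' -> b' = b).

(* initial segment of sequences (= inclusion of graphs) *)
Definition seq_le (s t : M) : Prop := forall z, E z s -> E z t.
Definition seq_lt (s t : M) : Prop := seq_le s t /\ s <> t.

End ModelDefs.

(* External cardinals, represented by well-ordered types.             *)
Definition le_card (A B : Type) : Prop :=
  exists f : A -> B, forall x y, f x = f y -> x = y.
Definition eq_card (A B : Type) : Prop :=
  exists f : A -> B, (forall x y, f x = f y -> x = y) /\ (forall y, exists x, f x = y).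

Definition is_wellorder (I : Type) (lt : I -> I -> Prop) : Prop :=
  (forall i, ~ lt i i) /\
  (forall i j k, lt i j -> lt j k -> lt i k) /\
  (forall i j, lt i j \/ i = j \/ lt j i) /\
  well_founded lt.

Definition is_cardinal (I : Type) (lt : I -> I -> Prop) : Prop :=
  is_wellorder I lt /\ forall i, ~ le_card I {j : I | lt j i}.

Definition is_inf_regular (I : Type) (lt : I -> I -> Prop) : Prop :=
  is_cardinal I lt /\ le_card nat I /\
  forall S : I -> Prop, (forall i, exists j, S j /\ ~ lt j i) -> le_card I {j : I | S j}.

Definition has_cut (M : Type) (E : M -> M -> Prop) (w : M)
    (A : Type) (ltA : A -> A -> Prop) (B : Type) (ltB : B -> B -> Prop) : Prop :=
  exists (a : A -> M) (b : B -> M),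
    (forall x, E (a x) w) /\ (forall y, E (b y) w) /\
    (forall x x', ltA x x' -> E (a x) (a x')) /\
    (forall y y', ltB y y' -> E (b y') (b y)) /\
    (forall x y, E (a x) (b y)) /\
    ~ exists c, E c w /\ forall x y, E (a x) c /\ E c (b y).

Definition in_C (M : Type) (E : M -> M -> Prop) (w : M)
    (A : Type) (ltA : A -> A -> Prop) (B : Type) (ltB : B -> B -> Prop) : Prop :=
  is_inf_regular A ltA /\ is_inf_regular B ltB /\ has_cut M E w A ltA B ltB.

Definition is_p (M : Type) (E : M -> M -> Prop) (w : M) (K : Type) : Prop :=
  (exists (A : Type) (ltA : A -> A -> Prop) (B : Type) (ltB : B -> B -> Prop),
      in_C M E w A ltA B ltB /\ eq_card (A + B)%type K) /\
  (forall (A : Type) (ltA : A -> A -> Prop) (B : Type) (ltB : B -> B -> Prop),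
      in_C M E w A ltA B ltB -> le_card K (A + B)%type).

(* |K| < t_V : for every n̂ ∈ ω̂ (n̂ ≠ 0), tree-tops(n̂^{<n̂}) > |K|, i.e. every
   strictly increasing sequence indexed by a cardinal of size ≤ |K| is bounded *)
Definition lt_t (M : Type) (E : M -> M -> Prop) (w : M) (K : Type) : Prop :=
  forall nh, E nh w -> (exists z, E z nh) ->
  forall (J : Type) (ltJ : J -> J -> Prop), is_cardinal J ltJ -> le_card J K ->
  forall f : J -> M,
    (forall j, is_seq M E nh (f j)) ->
    (forall i j, ltJ i j -> seq_lt M E (f i) (f j)) ->
    exists t, is_seq M E nh t /\ forall j, seq_le M E (f j) t.

From Stdlib Require Import Classical ClassicalEpsilon FunctionalExtensionality ProofIrrelevance Wellfounded.

(* Let (a_x) increasing and (b_y) decreasing, x, y < kappa, form a (kappa,kappa)-cut of the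
   model's omega, and let n = b_k0.  By recursion on i < kappa build a strictly increasing chain
   s_i in the tree n^{<n} such that s_i is defined exactly on some a_x with x > i, all its
   values lie above some b_z, and it takes some value <= b_i.  At stage i the earlier s_j have
   an upper bound in the tree because kappa < t; by regularity their domains lie below a single
   a_x0 and their values above a single b_y0, so cutting the bound down accordingly and
   continuing it by the constant b_y1 (y1 > i) up to a_x1 gives s_i.  An upper bound T of the
   whole chain satisfies "T(j) > k for all j <= k" at every k = a_x and at no k = b_y; the least
   k in omega where this fails exists by foundation, the condition being definable, and it lies
   in the cut. *)

Lemma sig_eq {A : Type} {P : A -> Prop} (u v : {x | P x}) : proj1_sig u = proj1_sig v -> u = v.
Proof. apply eq_sig_hprop. intros; apply proof_irrelevance. Qed.

Lemma wf_rec_chain {I X : Type} (ltI : I -> I -> Prop) (wf : well_founded ltI)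
    (P : I -> X -> Prop) (R : X -> X -> Prop) :
  inhabited X ->
  (forall i (c : {j | ltI j i} -> X),
     (forall u, P (proj1_sig u) (c u)) ->
     (forall u u', ltI (proj1_sig u) (proj1_sig u') -> R (c u) (c u')) ->
     exists x, P i x /\ forall u, R (c u) x) ->
  exists f : I -> X, forall i, P i (f i) /\ forall j, ltI j i -> R (f j) (f i).
Proof.
  intros inh step.
  set (F := fun i (rec : forall j, ltI j i -> X) =>
    epsilon inh (fun x => P i x /\ forall j (H : ltI j i), R (rec j H) x)).
  set (f := Fix wf (fun _ => X) F).
  assert (f_eq : forall i, f i = F i (fun j _ => f j)).
  { intro i. apply (Fix_eq wf (fun _ => X) F). intros x g1 g2 Hg.
    replace g2 with g1; [reflexivity|].
    do 2 (apply functional_extensionality_dep; intro). apply Hg. }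
  exists f. intro i. induction i as [i IH] using (well_founded_ind wf).
  rewrite f_eq. unfold F.
  apply (epsilon_spec inh (fun x => P i x /\ forall j (H : ltI j i), R (f j) x)).
  destruct (step i (fun u => f (proj1_sig u))) as [x [Px Rx]].
  - intros [j Hj]. apply IH, Hj.
  - intros [j Hj] [j' Hj'] H. apply (IH j' Hj'), H.
  - exists x. split; [exact Px|]. intros j H. exact (Rx (exist _ j H)).
Qed.

Section WellOrder.
Variables (K : Type) (lt : K -> K -> Prop).
Hypothesis hwo : is_wellorder K lt.

Lemma wo_irrefl i : ~ lt i i. Proof. apply hwo. Qed.
Lemma wo_trans i j k : lt i j -> lt j k -> lt i k. Proof. apply hwo. Qed.
Lemma wo_total i j : lt i j \/ i = j \/ lt j i. Proof. apply hwo. Qed.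
Lemma wo_wf : well_founded lt. Proof. apply hwo. Qed.

Lemma wo_least (P : K -> Prop) x : P x -> exists y, P y /\ forall z, lt z y -> ~ P z.
Proof.
  intro Px. apply NNPP; intro Hnone.
  assert (HnP : forall y, ~ P y).
  { intro y. induction y as [y IH] using (well_founded_ind wo_wf).
    intro Py. apply Hnone. exists y. split; assumption. }
  exact (HnP x Px).
Qed.

Definition segment_lt (d : K) (u v : {x | lt x d}) : Prop := lt (proj1_sig u) (proj1_sig v).

Definition cofinal_map (i d : K) (h : {v | lt v d} -> K) : Prop :=
  (forall v, lt (h v) i) /\ forall j, lt j i -> exists v, ~ lt (h v) j.

Section MinimalCofinal.
Variables (i d : K) (h : {v | lt v d} -> K).
Hypothesis hcof : cofinal_map i d h.
Hypothesis hmin : forall u, lt u d -> ~ exists g, cofinal_map i u g.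

Lemma minimal_cofinal_bounded (v : {x | lt x d}) (g : {u | segment_lt d u v} -> K) :
  (forall u, lt (g u) i) -> exists j0, lt j0 i /\ forall u, lt (g u) j0.
Proof.
  intro Hg. apply NNPP; intro Hunb. destruct v as [v Hv].
  apply (hmin v Hv).
  exists (fun x : {w | lt w v} =>
            g (exist _ (exist _ (proj1_sig x) (wo_trans _ _ _ (proj2_sig x) Hv))
                         (proj2_sig x))).
  split; [intro; apply Hg|].
  intros j Hj. apply NNPP; intro Hj'. apply Hunb. exists j. split; [exact Hj|].
  intros [[u Hud] Huv]. apply NNPP; intro Hu. apply Hj'.
  exists (exist _ u Huv). cbn. rewrite (proof_irrelevance _ _ Hud). exact Hu.
Qed.

Lemma minimal_cofinal_cardinal : is_cardinal {v | lt v d} (segment_lt d).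
Proof.
  split.
  - split; [|split; [|split]].
    + intro; apply wo_irrefl.
    + intros x y z; apply wo_trans.
    + intros x y. destruct (wo_total (proj1_sig x) (proj1_sig y)) as [H|[H|H]]; auto.
      right; left; apply sig_eq, H.
    + exact (wf_inverse_image _ _ lt (@proj1_sig _ _) wo_wf).
  - intros [u Hu] [e He].
    set (inv := fun x => epsilon (inhabits (exist _ u Hu : {v | lt v d}))
                                 (fun v => proj1_sig (proj1_sig (e v)) = x)).
    apply (hmin u Hu). exists (fun x => h (inv (proj1_sig x))).
    split; [intro; apply hcof|].
    intros j Hj. destruct (proj2 hcof j Hj) as [v Hv].
    exists (exist _ (proj1_sig (proj1_sig (e v))) (proj2_sig (e v))). cbn.
    replace (inv _) with v; [exact Hv|].
    apply He, sig_eq, sig_eq. symmetry.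
    apply (epsilon_spec _ (fun v' => proj1_sig (proj1_sig (e v')) = _)). eauto.
Qed.

Lemma minimal_cofinal_increasing : exists G : {v | lt v d} -> K,
  (forall v, lt (G v) i) /\
  (forall v v', segment_lt d v v' -> lt (G v) (G v')) /\
  (forall j, lt j i -> exists v, j = G v \/ lt j (G v)).
Proof.
  destruct (wf_rec_chain (segment_lt d) (wf_inverse_image _ _ lt (@proj1_sig _ _) wo_wf)
              (fun v x => lt x i /\ ~ lt x (h v)) lt (inhabits i)) as [G HG].
  - intros v c Hc Hmono.
    destruct (minimal_cofinal_bounded v c (fun u => proj1 (Hc u))) as [j0 [Hj0 Hbd]].
    destruct (wo_total j0 (h v)) as [H|H].
    + exists (h v). split; [split; [apply hcof|apply wo_irrefl]|].
      intro u. exact (wo_trans _ _ _ (Hbd u) H).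
    + exists j0. split; [split; [exact Hj0|]|exact Hbd].
      intro H'. destruct H as [->|H]; [exact (wo_irrefl _ H')|].
      exact (wo_irrefl _ (wo_trans _ _ _ H H')).
  - exists G. split; [|split].
    + intro v. apply HG.
    + intros v v' H. apply HG, H.
    + intros j Hj. destruct (proj2 hcof j Hj) as [v Hv]. exists v.
      destruct (HG v) as [[_ HGh] _].
      destruct (wo_total j (G v)) as [H|[H|H]]; auto. exfalso.
      destruct (wo_total (h v) (G v)) as [H'|[H'|H']].
      * exact (Hv (wo_trans _ _ _ H' H)).
      * apply Hv. rewrite H'. exact H.
      * exact (HGh H').
Qed.

End MinimalCofinal.

Lemma cofinal_increasing_cardinal i : exists (d : K) (G : {v | lt v d} -> K),
  is_cardinal {v | lt v d} (segment_lt d) /\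
  (forall v, lt (G v) i) /\
  (forall v v', segment_lt d v v' -> lt (G v) (G v')) /\
  (forall j, lt j i -> exists v, j = G v \/ lt j (G v)).
Proof.
  destruct (wo_least (fun d => exists h, cofinal_map i d h) i) as [d [[h hcof] hmin]].
  - exists (@proj1_sig _ _). split; [intro v; apply (proj2_sig v)|].
    intros j Hj. exists (exist _ j Hj). apply wo_irrefl.
  - exists d. destruct (minimal_cofinal_increasing i d h hcof hmin) as [G HG].
    exists G. split; [exact (minimal_cofinal_cardinal i d h hcof hmin)|exact HG].
Qed.

End WellOrder.

Section Regular.
Variables (K : Type) (lt : K -> K -> Prop).
Hypothesis hreg : is_inf_regular K lt.

Lemma regular_wellorder : is_wellorder K lt. Proof. apply hreg. Qed.

Lemma regular_inhabited : inhabited K.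
Proof. destruct hreg as [_ [[f _] _]]. exact (inhabits (f 0)). Qed.

Lemma regular_no_max i : exists j, lt i j.
Proof.
  apply NNPP; intro Hmax.
  destruct hreg as [_ [[f Hf] Hcof]].
  destruct (Hcof (fun j => j = i)) as [e He].
  - intro k. exists i. split; [reflexivity|]. intro Hik. apply Hmax. eauto.
  - assert (He01 : e (f 0) = e (f 1)).
    { apply sig_eq. now rewrite (proj2_sig (e (f 0))), (proj2_sig (e (f 1))). }
    discriminate (Hf _ _ (He _ _ He01)).
Qed.

Lemma regular_upper_bound i j : exists k, lt i k /\ lt j k.
Proof.
  pose proof regular_wellorder as hwo.
  destruct (wo_total K lt hwo i j) as [H|[<-|H]].
  - destruct (regular_no_max j) as [k Hk]. exists k.
    split; [exact (wo_trans K lt hwo _ _ _ H Hk)|exact Hk].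
  - destruct (regular_no_max i) as [k Hk]. eauto.
  - destruct (regular_no_max i) as [k Hk]. exists k.
    split; [exact Hk|exact (wo_trans K lt hwo _ _ _ H Hk)].
Qed.

Lemma regular_segment_bounded i (g : {j | lt j i} -> K) : exists x0, forall u, lt (g u) x0.
Proof.
  apply NNPP; intro Hunb.
  destruct hreg as [[_ Hcard] [_ Hcof]].
  destruct (Hcof (fun x => exists u, g u = x)) as [e He].
  - intro k. apply NNPP; intro Hk. apply Hunb. exists k. intro u.
    apply NNPP; intro Hu. apply Hk. exists (g u). split; eauto.
  - apply (Hcard i).
    exists (fun x => proj1_sig (constructive_indefinite_description _ (proj2_sig (e x)))).
    intros x y Hxy. apply He, sig_eq.
    destruct (constructive_indefinite_description _ (proj2_sig (e x))) as [ux Hx].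
    destruct (constructive_indefinite_description _ (proj2_sig (e y))) as [uy Hy].
    cbn in Hxy. congruence.
Qed.

Lemma regular_uniform_bound i (Q : {j | lt j i} -> K -> Prop) :
  (forall u, exists x, Q u x) -> (forall u x x', Q u x -> lt x x' -> Q u x') ->
  exists x0, forall u, Q u x0.
Proof.
  intros HQ Hup. destruct (choice _ HQ) as [g Hg].
  destruct (regular_segment_bounded i g) as [x0 Hx0].
  exists x0. intro u. exact (Hup u _ _ (Hg u) (Hx0 u)).
Qed.

End Regular.

Definition f_iff (A B : form) : form := fAnd (fImp A B) (fImp B A).
Definition f_opair (p a b : nat) : form :=
  fAll (f_iff (fIn 0 (S p))
     (fOr (fAll (f_iff (fIn 0 1) (fEq 0 (S (S a)))))
          (fAll (f_iff (fIn 0 1) (fOr (fEq 0 (S (S a))) (fEq 0 (S (S b)))))))).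
Definition f_rel (r a b : nat) : form := fEx (fAnd (fIn 0 (S r)) (f_opair 0 (S a) (S b))).
Definition f_empty (i : nat) : form := fAll (fNeg (fIn 0 (S i))).
Definition f_succ (s y : nat) : form :=
  fAll (f_iff (fIn 0 (S s)) (fOr (fIn 0 (S y)) (fEq 0 (S y)))).

Section Model.
Variables (M : Type) (E : M -> M -> Prop).

Lemma sat_opair e p a b : sat E e (f_opair p a b) <-> is_opair M E (e p) (e a) (e b).
Proof. unfold is_opair; cbn; split; intros H z; specialize (H z); firstorder. Qed.

Lemma sat_rel e r a b : sat E e (f_rel r a b) <-> rel_in M E (e r) (e a) (e b).
Proof.
  unfold rel_in; cbn [f_rel sat].
  split; intros [p [H1 H2]]; exists p; split; auto;
    apply (sat_opair (scons p e) 0 (S a) (S b)); auto.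
Qed.

Lemma sat_succ e s y : sat E e (f_succ s y) <-> is_succ M E (e s) (e y).
Proof. unfold is_succ; cbn; split; intros H z; specialize (H z); tauto. Qed.

Hypothesis hZ : ZFCminus M E.

Lemma zf_ext : Ax_ext M E. Proof. apply hZ. Qed.
Lemma zf_found : Ax_found M E. Proof. apply hZ. Qed.
Lemma zf_pair : Ax_pair M E. Proof. apply hZ. Qed.
Lemma zf_union : Ax_union M E. Proof. apply hZ. Qed.
Lemma zf_sep : Ax_sep M E. Proof. apply hZ. Qed.
Lemma zf_coll : Ax_coll M E. Proof. apply hZ. Qed.

Lemma separation (P : M -> Prop) phi e :
  (forall x, sat E (scons x e) phi <-> P x) ->
  forall a, exists b, forall x, E x b <-> E x a /\ P x.
Proof.
  intros HP a. destruct (zf_sep phi e a) as [b Hb].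
  exists b. intro x. rewrite Hb, HP. reflexivity.
Qed.

Lemma pair_set a b : exists c, forall x, E x c <-> x = a \/ x = b.
Proof.
  destruct (zf_pair a b) as [c [Ha Hb]].
  destruct (separation (fun x => x = a \/ x = b) (fOr (fEq 0 1) (fEq 0 2))
              (scons a (scons b (fun _ => a)))) with (a := c) as [d Hd].
  { intros; cbn; tauto. }
  exists d. intro x. rewrite Hd. split; [tauto|]. intros [->| ->]; auto.
Qed.

Lemma sing_set a : exists c, forall x, E x c <-> x = a.
Proof. destruct (pair_set a a) as [c Hc]. exists c. intro x; rewrite Hc; tauto. Qed.

Lemma union_set a b : exists c, forall x, E x c <-> E x a \/ E x b.
Proof.
  destruct (pair_set a b) as [p Hp].
  destruct (zf_union p) as [u Hu].
  destruct (separation (fun x => E x a \/ E x b) (fOr (fIn 0 1) (fIn 0 2))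
              (scons a (scons b (fun _ => a)))) with (a := u) as [c Hc].
  { intros; cbn; tauto. }
  exists c. intro x. rewrite Hc. split; [tauto|]. intros H. split; [|exact H].
  destruct H as [H|H]; [apply (Hu a)|apply (Hu b)]; auto; apply Hp; auto.
Qed.

Lemma opair_exists a b : exists p, is_opair M E p a b.
Proof.
  destruct (sing_set a) as [s1 H1]. destruct (pair_set a b) as [s2 H2].
  destruct (pair_set s1 s2) as [p Hp]. exists p. intro z. rewrite Hp. split.
  - intros [->| ->]; [left|right]; auto.
  - intros [H|H]; [left|right]; apply zf_ext; intro u; rewrite H; [rewrite H1|rewrite H2]; tauto.
Qed.

Lemma opair_unique p p' a b : is_opair M E p a b -> is_opair M E p' a b -> p = p'.
Proof. intros H H'. apply zf_ext. intro z. rewrite (H z), (H' z). reflexivity. Qed.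

Lemma opair_inj p a b a' b' :
  is_opair M E p a b -> is_opair M E p a' b' -> a = a' /\ b = b'.
Proof.
  intros H H'.
  destruct (sing_set a') as [s1 H1]. destruct (pair_set a' b') as [s2 H2].
  destruct (pair_set a b) as [t2 T2].
  assert (Hs1 : E s1 p) by (apply H'; left; auto).
  assert (Hs2 : E s2 p) by (apply H'; right; auto).
  assert (Ht2 : E t2 p) by (apply H; right; auto).
  assert (Haa : a = a').
  { apply H in Hs1. destruct Hs1 as [K|K].
    - symmetry. apply K, H1; auto.
    - apply H1, K; auto. }
  subst a'. split; [reflexivity|].
  apply H in Hs2. destruct Hs2 as [K|K].
  - assert (b' = a) by (apply K, H2; auto). subst b'.
    apply H' in Ht2. destruct Ht2 as [K2|K2].
    + apply K2, T2; auto.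
    + assert (Hb : E b t2) by (apply T2; auto). apply K2 in Hb. tauto.
  - assert (Hb' : E b' s2) by (apply H2; auto). apply K in Hb'.
    destruct Hb' as [->|]; auto.
    assert (Hb : E b s2) by (apply K; auto). apply H2 in Hb. destruct Hb; congruence.
Qed.

Lemma mem_irrefl x : ~ E x x.
Proof.
  intro Hx. destruct (sing_set x) as [c Hc].
  destruct (zf_found c) as [y [Hy Hmin]]; [exists x; apply Hc; auto|].
  apply Hc in Hy; subst y. apply Hmin. exists x; split; auto. apply Hc; auto.
Qed.

Variable w : M.
Hypothesis hw : is_omega M E w.

Lemma omega_ind (P : M -> Prop) phi e (HP : forall x, sat E (scons x e) phi <-> P x)
  (H0 : forall x, is_empty M E x -> E x w -> P x)
  (HS : forall y s, E y w -> P y -> is_succ M E s y -> P s) :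
  forall n, E n w -> P n.
Proof.
  destruct (separation P phi e HP w) as [b Hb].
  assert (Ib : inductive M E b).
  { destruct (proj1 hw) as [[z [Hz Hz']] Hs]. split.
    - exists z; split; auto. apply Hb; split; auto.
    - intros y Hy. apply Hb in Hy. destruct Hy as [Hy Py].
      destruct (Hs y Hy) as [s [Hs1 Hs2]]. exists s; split; auto. apply Hb; split; eauto. }
  intros n Hn. apply (proj2 hw b Ib) in Hn. apply Hb in Hn. tauto.
Qed.

Lemma omega_elem_trans n : E n w -> forall a b, E a b -> E b n -> E a n.
Proof.
  revert n. apply (omega_ind (fun n => forall a b, E a b -> E b n -> E a n)
    (fAll (fAll (fImp (fIn 1 0) (fImp (fIn 0 2) (fIn 1 2))))) (fun _ => w)).
  - intros; cbn; tauto.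
  - intros x Hx _ a b _ Hb. exfalso; eapply Hx; eauto.
  - intros y s _ IH Hs a b Hab Hb. apply Hs in Hb. apply Hs. left.
    destruct Hb as [Hb| ->]; eauto.
Qed.

Lemma omega_trans n : E n w -> forall m, E m n -> E m w.
Proof.
  revert n. apply (omega_ind (fun n => forall m, E m n -> E m w)
    (fAll (fImp (fIn 0 1) (fIn 0 2))) (fun _ => w)).
  - intros; cbn; tauto.
  - intros x Hx _ m Hm. exfalso; eapply Hx; eauto.
  - intros y s Hy IH Hs m Hm. apply Hs in Hm. destruct Hm as [Hm| ->]; eauto.
Qed.

Lemma empty_unique x y : is_empty M E x -> is_empty M E y -> x = y.
Proof.
  intros H H'. apply zf_ext. intro z.
  split; intro Hz; exfalso; [eapply H|eapply H']; eauto.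
Qed.

Lemma succ_unique s s' y : is_succ M E s y -> is_succ M E s' y -> s = s'.
Proof. intros H H'. apply zf_ext. intro z. rewrite (H z), (H' z). reflexivity. Qed.

Lemma omega_empty_or_contains_empty m :
  E m w -> is_empty M E m \/ forall z, is_empty M E z -> E z m.
Proof.
  revert m.
  apply (omega_ind _ (fOr (f_empty 0) (fAll (fImp (f_empty 0) (fIn 0 1)))) (fun _ => w)).
  - intros; cbn; unfold is_empty; tauto.
  - auto.
  - intros y s _ IH Hs. right. intros z Hz. apply Hs. destruct IH as [IH|IH].
    + right; apply empty_unique; auto.
    + left; auto.
Qed.

Lemma omega_succ_le m : E m w -> forall y s, E y m -> is_succ M E s y -> E s m \/ s = m.
Proof.
  revert m. apply (omega_ind (fun m => forall y s, E y m -> is_succ M E s y -> E s m \/ s = m)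
    (fAll (fAll (fImp (fIn 1 2) (fImp (f_succ 0 1) (fOr (fIn 0 2) (fEq 0 2)))))) (fun _ => w)).
  - intro x. cbn [sat]. split; intros H y s; specialize (H y s);
      rewrite (sat_succ (scons s (scons y (scons x (fun _ => w)))) 0 1) in *; cbn in *; tauto.
  - intros x Hx _ y s Hy. exfalso; eapply Hx; eauto.
  - intros m m' Hm IH Hs y s Hy Hsy. apply Hs in Hy. destruct Hy as [Hy| ->].
    + left. apply Hs. destruct (IH y s Hy Hsy) as [H| ->]; auto.
    + right. eapply succ_unique; eauto.
Qed.

Lemma omega_total n : E n w -> forall m, E m w -> E m n \/ m = n \/ E n m.
Proof.
  revert n. apply (omega_ind (fun n => forall m, E m w -> E m n \/ m = n \/ E n m)
    (fAll (fImp (fIn 0 2) (fOr (fIn 0 1) (fOr (fEq 0 1) (fIn 1 0))))) (fun _ => w)).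
  - intros; cbn; tauto.
  - intros x Hx _ m Hm. destruct (omega_empty_or_contains_empty m Hm) as [H|H].
    + right; left; apply empty_unique; auto.
    + right; right; auto.
  - intros y s Hy IH Hs m Hm. destruct (IH m Hm) as [H|[H|H]].
    + left; apply Hs; auto.
    + left; apply Hs; auto.
    + destruct (omega_succ_le m Hm y s H Hs) as [H'|H']; auto.
Qed.

(* Foundation yields a least element of the definable set of failures of [P]; it cannot lie
   at or below any [a x], nor at or above any [b y] since the [b y] have no least element. *)
Lemma definable_cut_fill {A B : Type} (a : A -> M) (b : B -> M) (P : M -> Prop) phi e
  (HP : forall x, sat E (scons x e) phi <-> P x)
  (Ha : forall x, E (a x) w) (Hb : forall y, E (b y) w)
  (Pdown : forall k j, E k w -> P k -> E j k -> P j)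
  (Pa : forall x, P (a x)) (Pb : forall y, ~ P (b y))
  (b_desc : forall y, exists y', E (b y') (b y)) (y0 : B) :
  exists c, E c w /\ forall x y, E (a x) c /\ E c (b y).
Proof.
  destruct (separation (fun k => ~ P k) (fNeg phi) e) with (a := w) as [D HD].
  { intro x. cbn [sat]. rewrite HP. reflexivity. }
  destruct (zf_found D) as [c [Hc Hmin]]; [exists (b y0); apply HD; auto|].
  apply HD in Hc. destruct Hc as [Hcw HcP].
  assert (Hb_notin : forall y, ~ E (b y) c).
  { intros y H. apply Hmin. exists (b y). split; [exact H|]. apply HD; auto. }
  exists c. split; [exact Hcw|]. intros x y. split.
  - destruct (omega_total (a x) (Ha x) c Hcw) as [H|[H|H]]; [| |exact H]; exfalso; apply HcP.
    + exact (Pdown _ _ (Ha x) (Pa x) H).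
    + rewrite H. apply Pa.
  - destruct (omega_total c Hcw (b y) (Hb y)) as [H|[H|H]]; [| |exact H]; exfalso.
    + exact (Hb_notin y H).
    + destruct (b_desc y) as [y' Hy']. apply (Hb_notin y'). rewrite <- H. exact Hy'.
Qed.

Definition stays_above (T k : M) : Prop :=
  forall j v, rel_in M E T j v -> (E j k \/ j = k) -> E k v.

Lemma sat_stays_above T e :
  forall k, sat E (scons k (scons T e))
              (fAll (fAll (fImp (f_rel 3 1 0) (fImp (fOr (fIn 1 2) (fEq 1 2)) (fIn 2 0)))))
            <-> stays_above T k.
Proof.
  intro k. unfold stays_above. cbn [sat]. setoid_rewrite sat_rel. cbn [scons]. reflexivity.
Qed.

Lemma stays_above_down T (Tw : forall j v, rel_in M E T j v -> E v w) k j :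
  E k w -> stays_above T k -> E j k -> stays_above T j.
Proof.
  intros Hkw Hk Hjk i v Hiv Hij.
  assert (Hik : E i k).
  { destruct Hij as [Hij| ->]; [exact (omega_elem_trans k Hkw i j Hij Hjk)|exact Hjk]. }
  exact (omega_elem_trans v (Tw i v Hiv) j k Hjk (Hk i v Hiv (or_introl Hik))).
Qed.

Lemma rel_in_union s r q : (forall p, E p s <-> E p r \/ E p q) ->
  forall k v, rel_in M E s k v <-> rel_in M E r k v \/ rel_in M E q k v.
Proof.
  intros Hs k v. split.
  - intros [p [Hp Hop]]. apply Hs in Hp. destruct Hp as [Hp|Hp]; [left|right]; exists p; auto.
  - intros [[p [Hp Hop]]|[p [Hp Hop]]]; exists p; split; auto; apply Hs; auto.
Qed.

Lemma rel_in_le s t k v : seq_le M E s t -> rel_in M E s k v -> rel_in M E t k v.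
Proof. intros H [p [Hp Hop]]. exists p. auto. Qed.

Lemma graph_trim t A0 B0 : exists r,
  (forall p, E p r -> exists k v, is_opair M E p k v) /\
  forall k v, rel_in M E r k v <-> rel_in M E t k v /\ E k A0 /\ E B0 v.
Proof.
  destruct (separation (fun p => exists k v, is_opair M E p k v /\ E k A0 /\ E B0 v)
              (fEx (fEx (fAnd (f_opair 2 1 0) (fAnd (fIn 1 3) (fIn 4 0)))))
              (scons A0 (scons B0 (fun _ => A0)))) with (a := t) as [r Hr].
  { intro p. cbn [sat]. setoid_rewrite sat_opair. cbn [scons]. reflexivity. }
  exists r. split.
  - intros p Hp. apply Hr in Hp. destruct Hp as [_ [k [v [Hop _]]]]. eauto.
  - intros k v. split.
    + intros [p [Hp Hop]]. apply Hr in Hp. destruct Hp as [Hpt [k' [v' [Hop' HK]]]].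
      destruct (opair_inj p k v k' v' Hop Hop') as [-> ->]. split; [exists p|]; auto.
    + intros [[p [Hpt Hop]] HK]. exists p. split; [|exact Hop].
      apply Hr. split; [exact Hpt|]. eauto.
Qed.

Lemma graph_const_off_domain A1 V r : exists q,
  (forall p, E p q -> exists k v, is_opair M E p k v) /\
  forall k v, rel_in M E q k v <-> v = V /\ E k A1 /\ ~ exists v', rel_in M E r k v'.
Proof.
  set (env k p := scons p (scons k (scons V (fun _ : nat => V)))).
  destruct (zf_coll (f_opair 0 1 2) (scons V (fun _ => V)) A1) as [C HC].
  { intros k _. destruct (opair_exists k V) as [p Hp].
    exists p. apply (sat_opair (env k p) 0 1 2), Hp. }
  destruct (separation
              (fun p => exists k, is_opair M E p k V /\ E k A1 /\ ~ exists v', rel_in M E r k v')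
              (fEx (fAnd (f_opair 1 0 4) (fAnd (fIn 0 3) (fNeg (fEx (f_rel 3 1 0))))))
              (scons r (scons A1 (scons V (fun _ => V))))) with (a := C) as [q Hq].
  { intro p. cbn [sat]. setoid_rewrite sat_opair. setoid_rewrite sat_rel. cbn [scons].
    reflexivity. }
  exists q. split.
  - intros p Hp. apply Hq in Hp. destruct Hp as [_ [k [Hop _]]]. eauto.
  - intros k v. split.
    + intros [p [Hp Hop]]. apply Hq in Hp. destruct Hp as [_ [k' [Hop' HK]]].
      destruct (opair_inj p k v k' V Hop Hop') as [-> ->]. auto.
    + intros [-> [Hk Hdom]]. destruct (HC k Hk) as [p [Hp Hop]].
      apply (sat_opair (env k p) 0 1 2) in Hop.
      exists p. split; [|exact Hop]. apply Hq. split; [exact Hp|]. exists k. auto.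
Qed.

Section Sequences.
Variable nh : M.

Lemma seq_val s k v : is_seq M E nh s -> rel_in M E s k v -> E v nh.
Proof.
  intros [m [_ [Hp _]]] [p [Hps Hop]]. destruct (Hp p Hps) as [a' [b' [Hop' [_ Hb']]]].
  destruct (opair_inj p k v a' b' Hop Hop') as [_ ->]. exact Hb'.
Qed.

Lemma seq_fun s k v v' :
  is_seq M E nh s -> rel_in M E s k v -> rel_in M E s k v' -> v = v'.
Proof.
  intros [m [_ [Hp Hf]]] Hv Hv'. destruct Hv as [p [Hps Hop]].
  destruct (Hp p Hps) as [a' [b' [Hop' [Ha' _]]]].
  destruct (opair_inj p k v a' b' Hop Hop') as [<- _].
  destruct (Hf k Ha') as [c [_ Hc]].
  rewrite (Hc v), (Hc v'); auto. exists p; auto.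
Qed.

Lemma seq_le_of_rel s t :
  is_seq M E nh s -> (forall k v, rel_in M E s k v -> rel_in M E t k v) -> seq_le M E s t.
Proof.
  intros [m [_ [Hp _]]] Hst p Hps. destruct (Hp p Hps) as [k [v [Hop _]]].
  destruct (Hst k v (ex_intro _ p (conj Hps Hop))) as [p' [Hp't Hop']].
  rewrite (opair_unique p p' k v Hop Hop'). exact Hp't.
Qed.

Lemma is_seq_intro s m : E m nh ->
  (forall p, E p s -> exists k v, is_opair M E p k v) ->
  (forall k v, rel_in M E s k v -> E k m /\ E v nh) ->
  (forall k, E k m -> exists v, rel_in M E s k v) ->
  (forall k v v', rel_in M E s k v -> rel_in M E s k v' -> v = v') ->
  is_seq M E nh s.
Proof.
  intros Hm Hpair Hrel Htot Hfun. exists m. split; [exact Hm|split].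
  - intros p Hp. destruct (Hpair p Hp) as [k [v Hop]].
    exists k, v. split; [exact Hop|]. apply Hrel. exists p. auto.
  - intros k Hk. destruct (Htot k Hk) as [v Hv]. exists v. split; [exact Hv|].
    intros v' Hv'. exact (Hfun k v' v Hv' Hv).
Qed.

Lemma seq_trim_extend t A0 A1 B0 V :
  is_seq M E nh t -> E A1 nh -> E V nh -> E A0 A1 -> (forall k, E k A0 -> E k A1) ->
  exists s, is_seq M E nh s /\
    (forall k, (exists v, rel_in M E s k v) <-> E k A1) /\
    (forall k v, rel_in M E s k v -> (rel_in M E t k v /\ E B0 v) \/ v = V) /\
    (forall k v, rel_in M E t k v -> E k A0 -> E B0 v -> rel_in M E s k v) /\
    rel_in M E s A0 V.
Proof.
  intros Ht HA1 HV HA01 HA0sub.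
  destruct (graph_trim t A0 B0) as [r [Hrp Hr]].
  destruct (graph_const_off_domain A1 V r) as [q [Hqp Hq]].
  destruct (union_set r q) as [s Hs].
  pose proof (rel_in_union s r q Hs) as Hsrel.
  assert (Hval : forall k v, rel_in M E s k v -> (rel_in M E t k v /\ E B0 v) \/ v = V).
  { intros k v H. apply Hsrel in H. destruct H as [H|H]; [apply Hr in H|apply Hq in H]; tauto. }
  assert (Hdom : forall k, (exists v, rel_in M E s k v) <-> E k A1).
  { intro k. split.
    - intros [v H]. apply Hsrel in H.
      destruct H as [H|H]; [apply HA0sub; apply Hr in H|apply Hq in H]; tauto.
    - intro Hk. destruct (classic (exists v, rel_in M E r k v)) as [[v Hv]|Hnd].
      + exists v. apply Hsrel. auto.
      + exists V. apply Hsrel. right. apply Hq. auto. }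
  exists s. split; [|split; [exact Hdom|split; [exact Hval|split]]].
  - apply (is_seq_intro s A1 HA1).
    + intros p Hp. apply Hs in Hp. destruct Hp as [Hp|Hp]; eauto.
    + intros k v H. split; [apply Hdom; eauto|].
      destruct (Hval k v H) as [[H' _]| ->]; [exact (seq_val t k v Ht H')|exact HV].
    + intros k Hk. apply Hdom, Hk.
    + intros k v v' H H'. apply Hsrel in H, H'.
      destruct H as [H|H]; destruct H' as [H'|H'].
      * apply Hr in H, H'. exact (seq_fun t k v v' Ht (proj1 H) (proj1 H')).
      * apply Hq in H'. exfalso. apply (proj2 (proj2 H')). eauto.
      * apply Hq in H. exfalso. apply (proj2 (proj2 H)). eauto.
      * apply Hq in H, H'. destruct H as [-> _], H' as [-> _]. reflexivity.
  - intros k v H Hk Hv. apply Hsrel. left. apply Hr. auto.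
  - apply Hsrel. right. apply Hq. split; [reflexivity|split; [exact HA01|]].
    intros [v Hv]. apply Hr in Hv. exact (mem_irrefl A0 (proj1 (proj2 Hv))).
Qed.

End Sequences.

Section Chain.
Variables (K : Type) (lt : K -> K -> Prop).
Hypothesis hreg : is_inf_regular K lt.
Hypothesis ht : lt_t M E w K.
Variables (a b : K -> M).
Hypothesis ha : forall x, E (a x) w.
Hypothesis hb : forall y, E (b y) w.
Hypothesis hamono : forall x x', lt x x' -> E (a x) (a x').
Hypothesis hbmono : forall y y', lt y y' -> E (b y') (b y).
Hypothesis hab : forall x y, E (a x) (b y).
Variable k0 : K.

Local Notation nh := (b k0).

Lemma nh_nonempty : exists z, E z nh.
Proof. exists (a k0). apply hab. Qed.

Lemma seq_val_omega s k v : is_seq M E nh s -> rel_in M E s k v -> E v w.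
Proof. intros Hs Hkv. exact (omega_trans nh (hb k0) v (seq_val nh s k v Hs Hkv)). Qed.

Definition good (i : K) (s : M) : Prop :=
  is_seq M E nh s /\
  (exists x, lt i x /\ forall k, (exists v, rel_in M E s k v) <-> E k (a x)) /\
  (exists z, forall k v, rel_in M E s k v -> E (b z) v) /\
  (exists k v, rel_in M E s k v /\ (E v (b i) \/ v = b i)).

(* [lt_t] only bounds chains indexed by cardinals, hence the detour through the cofinality
   of [i]. *)
Lemma chain_has_bound i (c : {j | lt j i} -> M) :
  (forall u, is_seq M E nh (c u)) ->
  (forall u u', lt (proj1_sig u) (proj1_sig u') -> seq_lt M E (c u) (c u')) ->
  exists t, is_seq M E nh t /\ forall u, seq_le M E (c u) t.
Proof.
  intros Hc Hmono.
  destruct (cofinal_increasing_cardinal K lt (regular_wellorder K lt hreg) i)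
    as [d [G [Hcard [HGi [HGmono HGcof]]]]].
  destruct (ht nh (hb k0) nh_nonempty _ _ Hcard)
    with (f := fun v => c (exist _ (G v) (HGi v))) as [t [Ht Htc]].
  - exists (@proj1_sig _ _). intros v v' H. apply sig_eq, H.
  - intro v. apply Hc.
  - intros v v' H. apply Hmono, HGmono, H.
  - exists t. split; [exact Ht|]. intro u.
    destruct (HGcof _ (proj2_sig u)) as [v [Hv|Hv]].
    + replace u with (exist (fun j => lt j i) (G v) (HGi v)) by (apply sig_eq; auto). apply Htc.
    + intros p Hp. apply (Htc v), (proj1 (Hmono u (exist _ (G v) (HGi v)) Hv)), Hp.
Qed.

Lemma good_family_bounds i (c : {j | lt j i} -> M) :
  (forall u, good (proj1_sig u) (c u)) ->
  exists x0 y0, forall u k v, rel_in M E (c u) k v -> E k (a x0) /\ E (b y0) v.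
Proof.
  intros Hc.
  destruct (regular_uniform_bound K lt hreg i
              (fun u x => forall k v, rel_in M E (c u) k v -> E k (a x))) as [x0 Hx0].
  { intro u. destruct (Hc u) as [_ [[x [_ Hx]] _]]. exists x. intros k v Hkv. apply Hx. eauto. }
  { intros u x x' Hx Hxx' k v Hkv.
    exact (omega_elem_trans (a x') (ha x') k (a x) (Hx k v Hkv) (hamono x x' Hxx')). }
  destruct (regular_uniform_bound K lt hreg i
              (fun u y => forall k v, rel_in M E (c u) k v -> E (b y) v)) as [y0 Hy0].
  { intro u. apply (Hc u). }
  { intros u y y' Hy Hyy' k v Hkv.
    apply (omega_elem_trans v (seq_val_omega (c u) k v (proj1 (Hc u)) Hkv) (b y') (b y)).
    - exact (hbmono y y' Hyy').
    - exact (Hy k v Hkv). }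
  exists x0, y0. intros u k v Hkv. split; [exact (Hx0 u k v Hkv)|exact (Hy0 u k v Hkv)].
Qed.

(* Strictness: the new value [b y1] sits at [a x0], outside all the earlier domains. *)
Lemma good_extend i (c : {j | lt j i} -> M) :
  (forall u, good (proj1_sig u) (c u)) ->
  (forall u u', lt (proj1_sig u) (proj1_sig u') -> seq_lt M E (c u) (c u')) ->
  exists s, good i s /\ forall u, seq_lt M E (c u) s.
Proof.
  intros Hc Hmono. pose proof (regular_wellorder K lt hreg) as hwo.
  destruct (chain_has_bound i c (fun u => proj1 (Hc u)) Hmono) as [t [Ht Htc]].
  destruct (good_family_bounds i c Hc) as [x0 [y0 Hbd]].
  destruct (regular_upper_bound K lt hreg x0 i) as [x1 [Hx01 Hix1]].
  destruct (regular_upper_bound K lt hreg y0 i) as [y' [Hy0' Hiy']].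
  destruct (regular_upper_bound K lt hreg y' k0) as [y1 [Hy'1 Hk0y1]].
  destruct (regular_no_max K lt hreg y1) as [y2 Hy12].
  destruct (seq_trim_extend nh t (a x0) (a x1) (b y0) (b y1) Ht (hab x1 k0)
              (hbmono k0 y1 Hk0y1) (hamono x0 x1 Hx01)) as [s [Hs [Hdom [Hval [Hext Hnew]]]]].
  { intros k Hk. exact (omega_elem_trans (a x1) (ha x1) k (a x0) Hk (hamono x0 x1 Hx01)). }
  exists s. split; [split; [exact Hs|split; [|split]]|].
  - exists x1. auto.
  - exists y2. intros k v Hkv.
    destruct (Hval k v Hkv) as [[Htkv Hv]| ->]; [|exact (hbmono y1 y2 Hy12)].
    apply (omega_elem_trans v (seq_val_omega t k v Ht Htkv) (b y2) (b y0)); [|exact Hv].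
    apply hbmono. apply (wo_trans K lt hwo _ y1); [apply (wo_trans K lt hwo _ y')|]; assumption.
  - exists (a x0), (b y1). split; [exact Hnew|]. left.
    apply hbmono. exact (wo_trans K lt hwo _ _ _ Hiy' Hy'1).
  - intro u. split.
    + apply (seq_le_of_rel nh); [apply (Hc u)|]. intros k v Hkv.
      apply Hext; [exact (rel_in_le _ _ k v (Htc u) Hkv)|apply (Hbd u k v Hkv)..].
    + intro Heq. apply (mem_irrefl (a x0)). apply (Hbd u (a x0) (b y1)).
      rewrite Heq. exact Hnew.
Qed.

Lemma good_chain : exists f : K -> M,
  forall i, good i (f i) /\ forall j, lt j i -> seq_lt M E (f j) (f i).
Proof.
  apply (wf_rec_chain lt (wo_wf K lt (regular_wellorder K lt hreg)) good (seq_lt M E)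
           (inhabits w)).
  exact good_extend.
Qed.

Section Bound.
Variables (f : K -> M) (T : M).
Hypothesis hf : forall i, good i (f i).
Hypothesis hT : is_seq M E nh T.
Hypothesis hfT : forall i, seq_le M E (f i) T.

Lemma bound_stays_above_a x : stays_above T (a x).
Proof.
  intros j v Hjv Hj.
  destruct (hf x) as [Hseq [[x' [Hxx' Hdom]] [[z Hz] _]]].
  assert (Hj' : E j (a x')).
  { destruct Hj as [Hj| ->]; [|exact (hamono x x' Hxx')].
    exact (omega_elem_trans (a x') (ha x') j (a x) Hj (hamono x x' Hxx')). }
  destruct (proj2 (Hdom j) Hj') as [v' Hv'].
  rewrite (seq_fun nh T j v v' hT Hjv (rel_in_le _ _ _ _ (hfT x) Hv')).
  exact (omega_elem_trans v' (seq_val_omega _ _ _ Hseq Hv') (a x) (b z) (hab x z) (Hz j v' Hv')).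
Qed.

Lemma bound_not_stays_above_b y : ~ stays_above T (b y).
Proof.
  intro HS. destruct (hf y) as [_ [[x' [_ Hdom]] [_ [k [v [Hkv Hv]]]]]].
  assert (Hk : E k (b y)).
  { apply (omega_elem_trans (b y) (hb y) k (a x')); [apply Hdom; eauto|apply hab]. }
  pose proof (HS k v (rel_in_le _ _ _ _ (hfT y) Hkv) (or_introl Hk)) as Hbv.
  apply (mem_irrefl (b y)). destruct Hv as [Hv| ->]; [|exact Hbv].
  exact (omega_elem_trans (b y) (hb y) (b y) v Hbv Hv).
Qed.

End Bound.

Lemma chain_fills_cut : exists c, E c w /\ forall x y, E (a x) c /\ E c (b y).
Proof.
  destruct good_chain as [f Hf].
  destruct (ht nh (hb k0) nh_nonempty K lt (proj1 hreg)
              (ex_intro _ (fun x => x) (fun x y H => H)) f) as [T [HT HfT]].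
  - intro i. apply Hf.
  - intros i j H. apply Hf, H.
  - apply (definable_cut_fill a b (stays_above T) _ (scons T (fun _ => w))
             (sat_stays_above T _) ha hb).
    + intros k j Hk HS.
      exact (stays_above_down T (fun j v H => seq_val_omega T j v HT H) k j Hk HS).
    + intro x. exact (bound_stays_above_a f T (fun i => proj1 (Hf i)) HT HfT x).
    + intro y. exact (bound_not_stays_above_b f T (fun i => proj1 (Hf i)) HfT y).
    + intro y. destruct (regular_no_max K lt hreg y) as [y' Hy']. exists y'. apply hbmono, Hy'.
    + exact k0.
Qed.

End Chain.
End Model.

Theorem mainTheorem6
  (M : Type) (E : M -> M -> Prop) (w : M)
  (hZ : ZFCminus M E) (hw : is_omega M E w) (hns : omega_nonstandard M E w)
  (K : Type) (ltK : K -> K -> Prop) (hK : is_cardinal K ltK)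
  (hp : is_p M E w K) (ht : lt_t M E w K) :
  ~ in_C M E w K ltK K ltK.
Proof.
  intros [hreg [_ [a [b [ha [hb [hamono [hbmono [hab hcut]]]]]]]]].
  destruct (regular_inhabited K ltK hreg) as [k0].
  exact (hcut (chain_fills_cut M E hZ w hw K ltK hreg ht a b ha hb hamono hbmono hab k0)).
Qed.
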